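(* Let $P\in\Delta$ be such that, under $P$, $Y$ and $Z$ are conditionally independent given $X$, and $Y$ and $Z$ are (unconditionally) independent. Then $\widetilde{SI}(X:Y;Z)=0$.
   Context: $X,Y,Z$ are random variables with finite state spaces $\mathcal X,\mathcal Y,\mathcal Z$. $\Delta$ denotes the set of all probability distributions on $\mathcal X\times\mathcal Y\times\mathcal Z$; $P\in\Delta$ is the joint distribution, and a subscript $Q$ means computed w.r.t. $Q\in\Delta$. $\Delta_P=\{Q\in\Delta: Q(X=x,Y=y)=P(X=x,Y=y)\text{ and }Q(X=x,Z=z)=P(X=x,Z=z)\ \forall x,y,z\}$. $CoI_Q(X;Y;Z)=MI_Q(X:Y)-MI_Q(X:Y|Z)$ and $\widetilde{SI}(X:Y;Z)=\max_{Q\in\Delta_P}CoI_Q(X;Y;Z)$. *)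

From mathcomp Require Import all_boot.
From Stdlib Require Import Reals.
Set Implicit Arguments. Unset Strict Implicit. Unset Printing Implicit Defensive.

Local Open Scope R_scope.

Notation "\rsum_ ( i : T ) F" := (\big[Rplus/0%R]_(i : T) F)
  (at level 41, F at level 41, i, T at level 50).

Section Info.
Variables (X Y Z : finType).

Definition jdist := X -> Y -> Z -> R.

Definition is_dist (Q : jdist) : Prop :=
  (forall x y z, 0 <= Q x y z) /\ \rsum_(x : X) \rsum_(y : Y) \rsum_(z : Z) Q x y z = 1.

Definition pXY (Q : jdist) x y := \rsum_(z : Z) Q x y z.
Definition pXZ (Q : jdist) x z := \rsum_(y : Y) Q x y z.
Definition pYZ (Q : jdist) y z := \rsum_(x : X) Q x y z.
Definition pX (Q : jdist) x := \rsum_(y : Y) \rsum_(z : Z) Q x y z.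
Definition pY (Q : jdist) y := \rsum_(x : X) \rsum_(z : Z) Q x y z.
Definition pZ (Q : jdist) z := \rsum_(x : X) \rsum_(y : Y) Q x y z.

Definition plog (p r : R) : R := if Req_EM_T p 0 then 0 else p * ln r.

Definition MI_XY (Q : jdist) : R :=
  \rsum_(x : X) \rsum_(y : Y) plog (pXY Q x y) (pXY Q x y / (pX Q x * pY Q y)).

Definition MI_XY_Z (Q : jdist) : R :=
  \rsum_(x : X) \rsum_(y : Y) \rsum_(z : Z)
    plog (Q x y z) (Q x y z * pZ Q z / (pXZ Q x z * pYZ Q y z)).

Definition CoI (Q : jdist) : R := MI_XY Q - MI_XY_Z Q.

Definition in_DeltaP (P Q : jdist) : Prop :=
  is_dist Q /\ (forall x y, pXY Q x y = pXY P x y) /\ (forall x z, pXZ Q x z = pXZ P x z).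

(* v = SI~(X:Y;Z) = max_{Q in Delta_P} CoI_Q(X;Y;Z): v is attained and is an upper bound *)
Definition is_SItilde (P : jdist) (v : R) : Prop :=
  (exists Q, in_DeltaP P Q /\ CoI Q = v) /\ (forall Q, in_DeltaP P Q -> CoI Q <= v).

Definition cond_indep_YZ_given_X (P : jdist) : Prop :=
  forall x y z, P x y z * pX P x = pXY P x y * pXZ P x z.

Definition indep_YZ (P : jdist) : Prop :=
  forall y z, pYZ P y z = pY P y * pZ P z.

End Info.

(* For Q in Delta_P let R be the distribution that keeps Q's
   (Y,Z)-marginal but uses P's conditional law of X given (Y,Z):
       R(x,y,z) = P(x,y,z) * Q(y,z) / P(y,z).
   Because Q and P share the (X,Y)- and (X,Z)-marginals, and P factorises as
   P(x,y,z) = P(x,y) P(x,z) / P(x) with P(y,z) = P(y) P(z), the integrand of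
   MI_Q(X:Y|Z) - MI_Q(X:Y) collapses to Q ln (Q / R) (lemma [gap_reweight]).
   On each fibre {(x,y,z) | x in X} the masses satisfy sum_x R <= sum_x Q, so
   the Gibbs inequality q - r <= q ln (q/r) makes every fibre sum nonnegative:
   CoI_Q <= 0.  For Q = P we have R = P, every logarithm vanishes and
   CoI_P = 0, so the bound is attained. *)

From Stdlib Require Import Reals Lra.
From mathcomp Require Import all_boot.
From HB Require Import structures.
Set Implicit Arguments. Unset Strict Implicit.
Local Open Scope R_scope.

(* Real addition is a commutative monoid law, enabling the generic bigop
   lemmas (big_split, exchange_big, bigD1) for the real sums [\rsum]. *)
HB.instance Definition _ :=
  Monoid.isComLaw.Build R 0 Rplus
    (fun a b c => esym (Rplus_assoc a b c)) Rplus_comm Rplus_0_l.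

Section FiniteSums.
Context {I : finType}.

Lemma sumR_mull (F : I -> R) (c : R) :
  \rsum_(i : I) (F i * c) = (\rsum_(i : I) F i) * c.
Proof.
apply: (big_rec2 (fun a b => a = b * c)); first by ring.
by move=> i a b _ ->; ring.
Qed.

Lemma sumR_sub (F G : I -> R) :
  \rsum_(i : I) (F i - G i) = \rsum_(i : I) F i - \rsum_(i : I) G i.
Proof.
rewrite /Rminus big_split /=; congr (_ + _).
apply: (big_rec2 (fun a b => a = - b)); first by ring.
by move=> i a b _ ->; ring.
Qed.

Lemma sumR_ge0 (P : pred I) (F : I -> R) :
  (forall i, P i -> 0 <= F i) -> 0 <= \big[Rplus/0]_(i | P i) F i.
Proof.
by move=> F_ge0; apply: (big_ind (fun a => 0 <= a)) => //; [lra | move=> a b; lra].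
Qed.

Lemma sumR_le (F G : I -> R) :
  (forall i, F i <= G i) -> \rsum_(i : I) F i <= \rsum_(i : I) G i.
Proof.
by move=> le_FG; apply: (big_ind2 (fun a b => a <= b)) => //; [lra | move=> a b c d; lra].
Qed.

Lemma sumR_gt0 (F : I -> R) (j : I) :
  (forall i, 0 <= F i) -> 0 < F j -> 0 < \rsum_(i : I) F i.
Proof.
move=> F_ge0 Fj_gt0; rewrite (bigD1 j) //=.
have := @sumR_ge0 (fun i => i != j) F (fun i _ => F_ge0 i); lra.
Qed.

End FiniteSums.

Lemma plogE (p r : R) : plog p r = p * ln r.
Proof. by rewrite /plog; case: Req_EM_T => [p0|_] //=; rewrite p0; ring. Qed.

Lemma ln_div (a b : R) : 0 < a -> 0 < b -> ln (a / b) = ln a - ln b.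
Proof.
move=> a_gt0 b_gt0; rewrite /Rdiv ln_mult ?ln_Rinv //.
exact: Rinv_0_lt_compat.
Qed.

(* Pointwise Gibbs inequality q - r <= q ln (q / r) for nonnegative q, r
   with r > 0 wherever q > 0; it follows from ln u <= u - 1 at u = r / q. *)
Lemma gibbs_pointwise (q r : R) :
  0 <= q -> 0 <= r -> (0 < q -> 0 < r) -> q - r <= q * ln (q / r).
Proof.
move=> q_ge0 r_ge0 supp; have [q0|q_gt0] : q = 0 \/ 0 < q by lra.
  by rewrite q0; lra.
have r_gt0 := supp q_gt0.
have ln_bound : ln r - ln q <= r / q - 1.
  have := exp_ineq1_le (ln (r / q)).
  by rewrite exp_ln ?ln_div //; [lra | exact: Rdiv_lt_0_compat].
have scaled : q * (ln r - ln q) <= q * (r / q - 1) by apply: Rmult_le_compat_l; lra.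
have r_minus_q : q * (r / q - 1) = r - q by field; lra.
rewrite ln_div //; lra.
Qed.

Section Marginals.
Variables (X Y Z : finType).
Implicit Types (P Q : jdist X Y Z).

Lemma pair_marginals_gt0 Q x y z :
  (forall x y z, 0 <= Q x y z) -> 0 < Q x y z ->
  [/\ 0 < pXY Q x y, 0 < pXZ Q x z & 0 < pYZ Q y z].
Proof.
move=> Q_ge0 Q_gt0.
by split; [apply: (sumR_gt0 (F := Q x y) (j := z)) | apply: (sumR_gt0 (F := Q x ^~ z) (j := y))
          | apply: (sumR_gt0 (F := fun x' => Q x' y z) (j := x))].
Qed.

Lemma single_marginals_gt0 Q x y z :
  (forall x y z, 0 <= Q x y z) -> 0 < Q x y z ->
  [/\ 0 < pX Q x, 0 < pY Q y & 0 < pZ Q z].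
Proof.
move=> Q_ge0 Q_gt0; have [XY_gt0 XZ_gt0 _] := pair_marginals_gt0 Q_ge0 Q_gt0.
have XY_ge0 x' y' : 0 <= pXY Q x' y' by apply: sumR_ge0.
have XZ_ge0 x' z' : 0 <= pXZ Q x' z' by apply: sumR_ge0.
split.
- by apply: (sumR_gt0 (F := pXY Q x) (j := y)).
- by apply: (sumR_gt0 (F := pXY Q ^~ y) (j := x)).
- by apply: (sumR_gt0 (F := pXZ Q ^~ z) (j := x)).
Qed.

(* Q in Delta_P shares with P its one-dimensional marginals, which are
   marginals of the fixed (X,Y)- and (X,Z)-marginals. *)
Lemma DeltaP_marginals P Q :
  in_DeltaP P Q ->
  [/\ forall x, pX Q x = pX P x, forall y, pY Q y = pY P y
    & forall z, pZ Q z = pZ P z].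
Proof.
move=> [_ [eqXY eqXZ]]; split.
- by move=> x; apply: (eq_bigr (F1 := pXY Q x)) => y _; rewrite eqXY.
- by move=> y; apply: (eq_bigr (F1 := pXY Q ^~ y)) => x _; rewrite eqXY.
- by move=> z; apply: (eq_bigr (F1 := pXZ Q ^~ z)) => x _; rewrite eqXZ.
Qed.

End Marginals.

Section CoInformationBound.
Variables (X Y Z : finType).
Implicit Types (P Q : jdist X Y Z).

Definition gap Q x y z :=
  Q x y z * (ln (Q x y z * pZ Q z / (pXZ Q x z * pYZ Q y z))
             - ln (pXY Q x y / (pX Q x * pY Q y))).

Lemma MI_gapE Q :
  MI_XY_Z Q - MI_XY Q = \rsum_(x : X) \rsum_(y : Y) \rsum_(z : Z) gap Q x y z.
Proof.
rewrite /MI_XY_Z /MI_XY -sumR_sub; apply: eq_bigr => x _.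
rewrite -sumR_sub; apply: eq_bigr => y _.
rewrite plogE /pXY -sumR_mull -sumR_sub; apply: eq_bigr => z _.
by rewrite plogE /gap /pXY; ring.
Qed.

(* R(x,y,z) = P(x | y,z) Q(y,z): Q's (Y,Z)-marginal with P's conditional
   law of X given (Y,Z). *)
Definition reweight P Q x y z := P x y z * (pYZ Q y z / pYZ P y z).

Hypotheses (P : jdist X Y Z) (P_dist : is_dist P).
Hypotheses (P_ci : cond_indep_YZ_given_X P) (P_indep : indep_YZ P).

(* The support of any Q in Delta_P lies in the support of P, since
   P(x,y,z) = P(x,y) P(x,z) / P(x) and these marginals are shared with Q. *)
Lemma DeltaP_support Q x y z :
  in_DeltaP P Q -> 0 < Q x y z -> 0 < P x y z.
Proof.
move=> DQ Q_gt0; have [[Q_ge0 _] [eqXY eqXZ]] := DQ.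
have [eqX _ _] := DeltaP_marginals DQ.
have [XY_gt0 XZ_gt0 _] := pair_marginals_gt0 Q_ge0 Q_gt0.
have [X_gt0 _ _] := single_marginals_gt0 Q_ge0 Q_gt0.
rewrite eqXY in XY_gt0; rewrite eqXZ in XZ_gt0; rewrite eqX in X_gt0.
have -> : P x y z = pXY P x y * pXZ P x z / pX P x by rewrite -P_ci; field; lra.
by apply: Rdiv_lt_0_compat => //; apply: Rmult_lt_0_compat.
Qed.

Lemma gap_reweight Q x y z :
  in_DeltaP P Q -> gap Q x y z = Q x y z * ln (Q x y z / reweight P Q x y z).
Proof.
move=> DQ; have [[Q_ge0 _] [eqXY eqXZ]] := DQ.
have [Q0|Q_gt0] : Q x y z = 0 \/ 0 < Q x y z by have := Q_ge0 x y z; lra.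
  by rewrite /gap Q0; ring.
have P_gt0 := DeltaP_support DQ Q_gt0.
have PYZ_gt0 : 0 < pYZ P y z.
  by apply: (sumR_gt0 (j := x)) => // x'; case: P_dist.
have [eqX eqY eqZ] := DeltaP_marginals DQ.
have [XY_gt0 XZ_gt0 YZ_gt0] := pair_marginals_gt0 Q_ge0 Q_gt0.
have [X_gt0 Y_gt0 Z_gt0] := single_marginals_gt0 Q_ge0 Q_gt0.
have cond_ratio_gt0 : 0 < Q x y z * pZ Q z / (pXZ Q x z * pYZ Q y z).
  by apply: Rdiv_lt_0_compat; apply: Rmult_lt_0_compat.
have ratio_gt0 : 0 < pXY Q x y / (pX Q x * pY Q y).
  by apply: Rdiv_lt_0_compat => //; apply: Rmult_lt_0_compat.
rewrite /gap /reweight -ln_div //.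
congr (_ * ln _).
rewrite eqX eqY eqZ eqXY eqXZ in X_gt0 Y_gt0 Z_gt0 XY_gt0 XZ_gt0 *.
rewrite P_indep in PYZ_gt0 *.
have -> : P x y z = pXY P x y * pXZ P x z / pX P x by rewrite -P_ci; field; lra.
by field; repeat split; lra.
Qed.

(* On each (Y,Z)-fibre, R carries at most the mass of Q, so the Gibbs
   inequality makes the fibre sum of the gap nonnegative. *)
Lemma gap_fibre_ge0 Q y z :
  in_DeltaP P Q -> 0 <= \rsum_(x : X) gap Q x y z.
Proof.
move=> DQ; have [[Q_ge0 _] _] := DQ; have [P_ge0 _] := P_dist.
have YZ_ge0 : 0 <= pYZ Q y z by apply: sumR_ge0.
have PYZ_ge0 : 0 <= pYZ P y z by apply: sumR_ge0.
have R_ge0 x : 0 <= reweight P Q x y z.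
  have [P0|PYZ_gt0] : pYZ P y z = 0 \/ 0 < pYZ P y z by lra.
    by rewrite /reweight P0 Rdiv_0_r Rmult_0_r; lra.
  apply: Rmult_le_pos => //; apply: Rmult_le_pos => //.
  by apply: Rlt_le; apply: Rinv_0_lt_compat.
have R_mass : \rsum_(x : X) reweight P Q x y z <= pYZ Q y z.
  rewrite /reweight sumR_mull -/(pYZ P y z).
  have [P0|PYZ_gt0] : pYZ P y z = 0 \/ 0 < pYZ P y z by lra.
    by rewrite P0 Rmult_0_l.
  by right; field; lra.
have gibbs x : Q x y z - reweight P Q x y z <= gap Q x y z.
  rewrite gap_reweight //; apply: gibbs_pointwise => // Q_gt0.
  have P_gt0 := DeltaP_support DQ Q_gt0.
  have [_ _ YZ_gt0] := pair_marginals_gt0 Q_ge0 Q_gt0.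
  have PYZ_gt0 : 0 < pYZ P y z by apply: (sumR_gt0 (j := x)).
  by apply: Rmult_lt_0_compat => //; apply: Rdiv_lt_0_compat.
apply: Rle_trans (sumR_le gibbs).
by rewrite sumR_sub -/(pYZ Q y z); lra.
Qed.

Lemma CoI_le0 Q : in_DeltaP P Q -> CoI Q <= 0.
Proof.
move=> DQ; suff : 0 <= MI_XY_Z Q - MI_XY Q by rewrite /CoI; lra.
rewrite MI_gapE exchange_big /=; apply: sumR_ge0 => y _.
by rewrite exchange_big /=; apply: sumR_ge0 => z _; apply: gap_fibre_ge0.
Qed.

(* Attainment: for Q = P the reweighted law is P itself, so CoI_P = 0. *)
Lemma CoI_P : CoI P = 0.
Proof.
have DP : in_DeltaP P P by split.
have [P_ge0 _] := P_dist.
suff : MI_XY_Z P - MI_XY P = 0 by rewrite /CoI; lra.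
rewrite MI_gapE; apply: big1 => x _; apply: big1 => y _; apply: big1 => z _.
rewrite gap_reweight // /reweight.
have [P0|P_gt0] : P x y z = 0 \/ 0 < P x y z by have := P_ge0 x y z; lra.
  by rewrite P0; ring.
have [_ _ PYZ_gt0] := pair_marginals_gt0 P_ge0 P_gt0.
have -> : P x y z / (P x y z * (pYZ P y z / pYZ P y z)) = 1 by field; lra.
by rewrite ln_1; ring.
Qed.

End CoInformationBound.

Theorem mainTheorem7 (X Y Z : finType) (P : jdist X Y Z) :
  is_dist P -> cond_indep_YZ_given_X P -> indep_YZ P -> is_SItilde P 0.
Proof.
move=> P_dist P_ci P_indep; split.
- by exists P; split; [split | exact: CoI_P].
- by move=> Q DQ; exact: CoI_le0 DQ.
Qed.
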